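(* Let $B$ be an nbc basis of $M$ with $\mathrm{IA}(B)=\{c_1>\cdots>c_{k+1}\}$, and set $S_B=B-\mathrm{IA}(B)=\{e_1>\cdots>e_{r-k}\}$ and $T_B=(E-B)-\min(E-B)=\{e_{r-k+1}<\cdots<e_{n-k-1}\}$. Then: (1) The largest index $i$ such that $c_i\notin\mathrm{cl}(S_B)\cup\mathrm{cl}^\perp(T_B)$ exists and equals the smallest index $i$ such that $\mathrm{cl}(S_B\cup\{c_1,\dots,c_i\})\cup\mathrm{cl}^\perp(T_B)=E$. (2) With this $i$, the set of $n-1$ pairs $F^+_j|G^+_j$, $1\le j\le n-1$, given by $\mathrm{cl}\{e_1,\dots,e_j\}\,|\,E$ for $1\le j\le r-k$; $\mathrm{cl}(S_B\cup\{c_1,\dots,c_{j-(r-k)}\})\,|\,E$ for $1\le j-(r-k)\le i-1$; $\mathrm{cl}(S_B\cup\{c_1,\dots,c_{j-(r-k)}\})\,|\,\mathrm{cl}^\perp(T_B)$ for $i\le j-(r-k)\le k$; $E\,|\,\mathrm{cl}^\perp\{e_{j-k},\dots,e_{n-k-1}\}$ for $r+1\le j\le n-1$, is a maximal biflag of $M$.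
   Context: Let $M$ be a matroid with no loops and no coloops on the ground set $E=\{0,1,\dots,n\}$, totally ordered by the usual order of integers, of rank $r+1$; its dual $M^\perp$ has rank $n-r$. Write $\mathrm{cl}$, $\mathrm{cl}^\perp$ for the closure operators of $M$, $M^\perp$. A biflat of $M$ is a pair $F|G$ where $F$ is a flat of $M$, $G$ is a flat of $M^\perp$, both are nonempty, they are not both equal to $E$, and $F\cup G=E$. Two biflats $F|G$, $F'|G'$ are compatible if ($F\subseteq F'$ and $G\supseteq G'$) or ($F\supseteq F'$ and $G\subseteq G'$). A biflag is a set of pairwise compatible biflats with $\bigcup_{F|G}(F\cap G)\neq E$; maximal means maximal under inclusion among biflags. For a basis $B$ and $i\in B$, $C^\perp(B,i)$ is the unique cocircuit of $M$ contained in $(E-B)\cup i$ and containing $i$; for $i\notin B$, $C(B,i)$ is the unique circuit contained in $B\cup i$ and containing $i$. $\mathrm{IA}(B)=\{i\in B: i=\min C^\perp(B,i)\}$, $\mathrm{EA}(B)=\{i\notin B: i=\min C(B,i)\}$. $B$ is an nbc basis if $\mathrm{EA}(B)=\emptyset$. *)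

(* Matroids on the ground set E = {0,...,n} = 'I_n.+1,
   given by their independent sets. *)
From mathcomp Require Import all_boot.
Set Implicit Arguments. Unset Strict Implicit. Unset Printing Implicit Defensive.

Record matroid (n : nat) := Matroid {
  indep : {set 'I_n.+1} -> bool;
  indep0 : indep set0;
  indep_sub : forall A B : {set 'I_n.+1}, B \subset A -> indep A -> indep B;
  indep_aug : forall A B : {set 'I_n.+1}, indep A -> indep B -> #|A| < #|B| ->
     exists2 x, x \in B :\: A & indep (x |: A) }.

Section Defs.
Variables (n : nat) (M : matroid n).
Local Notation T := 'I_n.+1.

Definition rk (ind : {set T} -> bool) (X : {set T}) : nat :=
  \max_(I : {set T} | ind I && (I \subset X)) #|I|.
Definition clo (ind : {set T} -> bool) (X : {set T}) : {set T} :=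
  [set x | rk ind (x |: X) == rk ind X].

Definition rank := rk (indep M).
Definition cl := clo (indep M).
Definition is_basis (B : {set T}) := indep M B && (#|B| == rank setT).

Definition indepD (X : {set T}) := [exists B : {set T}, is_basis B && [disjoint X & B]].
Definition clD := clo indepD.

Definition circuit_of (ind : {set T} -> bool) (C : {set T}) :=
  ~~ ind C && [forall D : {set T}, (D \proper C) ==> ind D].
Definition circuit := circuit_of (indep M).
Definition cocircuit := circuit_of indepD.

Definition is_loop (x : T) := ~~ indep M [set x].
Definition is_coloop (x : T) := forall B, is_basis B -> x \in B.

Definition IA (B : {set T}) : {set T} :=
  [set i in B | [exists C : {set T}, [&& cocircuit C, C \subset (~: B) :|: [set i],
                 i \in C & [forall x in C, i <= x]]]].
Definition EA (B : {set T}) : {set T} :=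
  [set i in ~: B | [exists C : {set T}, [&& circuit C, C \subset B :|: [set i],
                 i \in C & [forall x in C, i <= x]]]].
Definition nbc_basis (B : {set T}) := is_basis B && (EA B == set0).

Definition flat (F : {set T}) := cl F == F.
Definition flatD (G : {set T}) := clD G == G.
Definition biflat (p : {set T} * {set T}) :=
  [&& flat p.1, flatD p.2, p.1 != set0, p.2 != set0,
      ~~ ((p.1 == setT) && (p.2 == setT)) & p.1 :|: p.2 == setT].
Definition compatible (p q : {set T} * {set T}) :=
  ((p.1 \subset q.1) && (q.2 \subset p.2)) || ((q.1 \subset p.1) && (p.2 \subset q.2)).
Definition biflag (P : {set {set T} * {set T}}) :=
  [&& [forall p in P, biflat p], [forall p in P, forall q in P, compatible p q]
    & \bigcup_(p in P) (p.1 :&: p.2) != setT].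
Definition maximal_biflag (P : {set {set T} * {set T}}) :=
  biflag P /\ forall Q, biflag Q -> P \subset Q -> Q = P.

Definition S_B (B : {set T}) := B :\: IA B.
(* (E - B) - min(E - B) *)
Definition T_B (B : {set T}) := [set x in ~: B | [exists y in ~: B, y < x]].
(* c_1 > c_2 > ... > c_{k+1} : IA(B) in decreasing order *)
Definition cseq (B : {set T}) : seq T := sort (fun x y : T => y <= x) (enum (IA B)).
Definition c (B : {set T}) (j : nat) : T := nth ord0 (cseq B) j.-1.
(* e_1 > ... > e_{r-k} (S_B decreasing) followed by e_{r-k+1} < ... < e_{n-k-1} (T_B increasing) *)
Definition eseq (B : {set T}) : seq T :=
  sort (fun x y : T => y <= x) (enum (S_B B)) ++ sort (fun x y : T => x <= y) (enum (T_B B)).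
Definition sset (s : seq T) : {set T} := [set x in s].
Definition cfirst (B : {set T}) (m : nat) := sset (take m (cseq B)).

(* the pairs F^+_j | G^+_j, with r + 1 = rank M, k + 1 = #|IA B|, and i the index of part (1) *)
Definition FGplus (B : {set T}) (r k i j : nat) : {set T} * {set T} :=
  if j <= r - k then (cl (sset (take j (eseq B))), setT)
  else if j <= r then
    let m := j - (r - k) in
    (cl (S_B B :|: cfirst B m), if m <= i - 1 then setT else clD (T_B B))
  else (setT, clD (sset (drop (j - k).-1 (eseq B)))).
End Defs.

(* Let b0 = min (E - B) and let D = C(B, b0) be its fundamental circuit. The complement of
   cl^*(T_B) = cl^*((E - B) - b0) is exactly D. As B is nbc, b0 is not the least element of D,
   while every element of B below b0 is internally active; so D meets IA(B), and we let
   c_i = a0 be the least element of IA(B) ∩ D. The c_j outside cl(S_B) ∪ cl^*(T_B) are those in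
   D, the last of which is c_i; and cl(S_B ∪ {c_1, ..., c_m}) contains D ∩ B, hence b0, exactly
   when m >= i.
   For (2), the level rk F + rk^*(E) - rk^*(G) of a biflat F | G is strictly monotone along
   compatible biflats, and the pairs F^+_j | G^+_j take every level in 1..n except
   gap = r - k + i. A biflat compatible with all of them has level gap and lies between
   cl(S_B ∪ {c_1, ..., c_(i-1)}) | E and cl(S_B ∪ {c_1, ..., c_i}) | cl^*(T_B); by flatness it is
   either cl(S_B ∪ {c_1, ..., c_(i-1)}) | cl^*(T_B), whose union misses a0, or
   cl(S_B ∪ {c_1, ..., c_i}) | E, whose diagonal together with that of E | cl^*(T_B) covers E. *)

From mathcomp Require Import all_boot zify.
Set Implicit Arguments. Unset Strict Implicit. Unset Printing Implicit Defensive.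

(* Statements over ['I_n.+1] may or may not carry a [reverse_coercion] marker on the finType
   instance, and [lia] only identifies syntactically equal atoms. *)
Ltac set_lia := try unfold reverse_coercion in *; lia.

(** * Rank and closure *)

Section Rank.
Variables (n : nat) (M : matroid n).
Local Notation T := 'I_n.+1.
Implicit Types (X Y F I J : {set T}) (x : T).

Lemma exists_indep_rank X : exists2 I, indep M I && (I \subset X) & #|I| = rank M X.
Proof.
have P0 : indep M set0 && (set0 \subset X) by rewrite indep0 sub0set.
exists [arg max_(I > set0 | indep M I && (I \subset X)) #|I|]; first by case: arg_maxnP.
by rewrite /rank /rk (bigmax_eq_arg set0).
Qed.

Lemma indep_leq_rank I X : indep M I -> I \subset X -> #|I| <= rank M X.
Proof. by move=> hI hIX; apply: (bigmax_sup I) => //; rewrite hI hIX. Qed.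

Lemma rank_leq_card X : rank M X <= #|X|.
Proof. by case: (exists_indep_rank X) => I /andP[_ /subset_leq_card ? <-]. Qed.

Lemma rankS X Y : X \subset Y -> rank M X <= rank M Y.
Proof.
move=> hXY; case: (exists_indep_rank X) => I /andP[hI hIX] <-.
exact: indep_leq_rank hI (subset_trans hIX hXY).
Qed.

Lemma rank_leqT X : rank M X <= rank M setT.
Proof. exact/rankS/subsetT. Qed.

Lemma rank_indep I : indep M I -> rank M I = #|I|.
Proof. by move=> hI; apply/eqP; rewrite eqn_leq rank_leq_card indep_leq_rank. Qed.

Lemma indep_rank_card X : rank M X = #|X| -> indep M X.
Proof.
case: (exists_indep_rank X) => I /andP[hI hIX] <- eIX.
by have /eqP <- : I == X by rewrite eqEcard hIX eIX leqnn.
Qed.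

Lemma indep_extend I X : indep M I -> I \subset X ->
  exists J, [/\ indep M J, I \subset J, J \subset X & #|J| = rank M X].
Proof.
move=> hI hIX; move Hd : (rank M X - #|I|) => d.
elim: d I hI hIX Hd => [|d IH] I hI hIX Hd.
  by exists I; split => //; have := indep_leq_rank hI hIX; lia.
case: (exists_indep_rank X) => K /andP[hK hKX] eK.
case: (@indep_aug _ M I K hI hK _) => [|x /setDP[xK xI] hxI]; first lia.
have hxX : x |: I \subset X by rewrite subUset sub1set (subsetP hKX) // hIX.
case: (IH _ hxI hxX) => [|J [hJ hxIJ hJX eJ]]; first by rewrite cardsU1 xI; lia.
by exists J; split => //; apply: subset_trans hxIJ; apply: subsetUr.
Qed.

Lemma rankU1 x X : rank M X <= rank M (x |: X) <= (rank M X).+1.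
Proof.
rewrite rankS ?subsetUr //=.
case: (exists_indep_rank (x |: X)) => I /andP[hI hIX] <-.
have hIx : I :\ x \subset X.
  by apply/subsetP => y /setD1P[yx /(subsetP hIX)]; rewrite in_setU1 (negPf yx).
have := indep_leq_rank (indep_sub (subD1set I x) hI) hIx.
by rewrite (cardsD1 x I); case: (x \in I) => /= h; [rewrite add1n ltnS | rewrite add0n leqW].
Qed.

Lemma rankU1_neq x X : rank M (x |: X) != rank M X -> rank M (x |: X) = (rank M X).+1.
Proof. by have := rankU1 x X; lia. Qed.

Lemma clP x X : (x \in cl M X) = (rank M (x |: X) == rank M X).
Proof. by rewrite inE. Qed.

Lemma sub_cl X : X \subset cl M X.
Proof.
by apply/subsetP => x xX; rewrite clP; have /setUidPr -> : [set x] \subset X by rewrite sub1set.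
Qed.

Lemma clS X Y : X \subset Y -> cl M X \subset cl M Y.
Proof.
move=> hXY; apply/subsetP => x; rewrite !clP => /eqP hx.
case: (boolP (x \in Y)) => xY.
  by have /setUidPr -> : [set x] \subset Y by rewrite sub1set.
case: (exists_indep_rank X) => I /andP[hI hIX] eI.
case: (indep_extend hI (subset_trans hIX hXY)) => J [hJ hIJ hJY eJ].
case: (indep_extend hJ (subset_trans hJY (subsetUr [set x] Y))) => J' [hJ' hJJ' hJ'Y eJ'].
apply/eqP/anti_leq; move/andP: (rankU1 x Y) => [-> _]; rewrite andbT leqNgt.
apply/negP => lt.
have xJ' : x \in J'.
  apply/negPn/negP => xJ'; have : J' \subset Y.
    apply/subsetP => y yJ'; move: (subsetP hJ'Y y yJ'); rewrite in_setU1.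
    by case/predU1P => [yx|//]; rewrite -yx yJ' in xJ'.
  by move/(indep_leq_rank hJ'); rewrite eJ' leqNgt lt.
have xI : x \notin I by apply: contra xY => /(subsetP hIJ) /(subsetP hJY).
have hxI : indep M (x |: I).
  by apply: indep_sub hJ'; rewrite subUset sub1set xJ' (subset_trans hIJ hJJ').
by have := indep_leq_rank hxI (setUS [set x] hIX); rewrite cardsU1 xI add1n hx -eI ltnn.
Qed.

Lemma rank_cl X : rank M (cl M X) = rank M X.
Proof.
apply/anti_leq; rewrite (rankS (sub_cl X)) andbT.
case: (exists_indep_rank X) => I /andP[hI hIX] eI.
case: (indep_extend hI (subset_trans hIX (sub_cl X))) => J [hJ hIJ hJX <-].
rewrite -eI leqNgt; apply/negP => lt.
have /subsetPn[y yJ yI] : ~~ (J \subset I) by apply/negP => /subset_leq_card; lia.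
have := subsetP hJX y yJ; rewrite clP => /eqP hy.
have hyI : indep M (y |: I) by apply: indep_sub hJ; rewrite subUset sub1set yJ.
by have := indep_leq_rank hyI (setUS [set y] hIX); rewrite cardsU1 yI add1n hy -eI ltnn.
Qed.

Lemma flat_cl X : flat M (cl M X).
Proof.
rewrite /flat eqEsubset sub_cl andbT; apply/subsetP => x; rewrite !clP rank_cl => /eqP h.
apply/eqP/anti_leq; rewrite (rankS (subsetUr _ _)) andbT -h.
exact/rankS/setUS/sub_cl.
Qed.

Lemma flat_setT : flat M setT.
Proof. by apply/eqP/setP => x; rewrite clP in_setT setUT eqxx. Qed.

Lemma flat_eq F F' : flat M F -> F \subset F' -> rank M F' <= rank M F -> F = F'.
Proof.
move=> /eqP hF hFF' le; apply/eqP; rewrite eqEsubset hFF'; apply/subsetP => x xF'.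
rewrite -hF clP; apply/eqP/anti_leq; move/andP: (rankU1 x F) => [-> _]; rewrite andbT.
by apply: leq_trans le; apply: rankS; rewrite subUset sub1set xF'.
Qed.

Lemma flat_rank_setT F : flat M F -> rank M F = rank M setT -> F = setT.
Proof. by move=> hF e; apply: flat_eq hF (subsetT F) _; rewrite e. Qed.

Lemma indep_notin_cl Y X x : indep M X -> Y \subset X -> x \in X -> x \notin Y ->
  x \notin cl M Y.
Proof.
move=> hX hYX xX xY; rewrite clP.
have hxY : indep M (x |: Y) by apply: indep_sub hX; rewrite subUset sub1set xX.
by rewrite !rank_indep ?(indep_sub hYX) // cardsU1 xY; lia.
Qed.

Lemma rank_gt0 F x : indep M [set x] -> x \in F -> 0 < rank M F.
Proof. by move=> hx xF; move: (indep_leq_rank (X := F) hx); rewrite sub1set cards1; apply. Qed.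

Lemma set0_rank_gt0 F : 0 < rank M F -> F != set0.
Proof. by apply: contraTneq => ->; have := rank_leq_card set0; rewrite cards0; lia. Qed.

Lemma cl0_loopless : (forall x, indep M [set x]) -> cl M set0 = set0.
Proof.
move=> h; apply/setP => x; rewrite clP in_set0 setU0 rank_indep // cards1.
by rewrite (rank_indep (indep0 M)) cards0.
Qed.

End Rank.

Lemma exists_circuit (T : finType) (ind : {set T} -> bool) (Y : {set T}) :
  ~~ ind Y ->
  exists2 C : {set T}, C \subset Y & ~~ ind C && [forall D : {set T}, (D \proper C) ==> ind D].
Proof.
move=> hY; case: (minset_exists (P := [pred C | ~~ ind C]) hY) => C /minsetP[/= hC hmin] hCY.
exists C => //; rewrite hC /=; apply/forall_inP => D hD; apply/negPn/negP => hnD.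
by move: (hD); rewrite (hmin D hnD (proper_sub hD)) properxx.
Qed.

(** * The dual matroid *)

Section Dual.
Variables (n : nat) (M : matroid n).
Local Notation T := 'I_n.+1.
Implicit Types (X Y I J : {set T}).

Lemma indepDE X : indepD M X = (rank M (~: X) == rank M setT).
Proof.
apply/idP/idP.
  case/existsP => B /andP[/andP[hB /eqP eB] dis]; rewrite eqn_leq rank_leqT -eB.
  by apply: indep_leq_rank hB _; rewrite disjoint_sym disjoints_subset in dis.
move/eqP => e; case: (exists_indep_rank M (~: X)) => I /andP[hI hIX] eI.
apply/existsP; exists I; rewrite /is_basis hI eI e eqxx /=.
by rewrite disjoint_sym disjoints_subset.
Qed.

Lemma indepD0 : indepD M set0.
Proof. by rewrite indepDE setC0. Qed.

Lemma indepD_sub X Y : Y \subset X -> indepD M X -> indepD M Y.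
Proof.
move=> hYX; rewrite !indepDE => /eqP e; rewrite eqn_leq rank_leqT -e.
by apply: rankS; rewrite setCS.
Qed.

Lemma indepD_aug I J : indepD M I -> indepD M J -> #|I| < #|J| ->
  exists2 x, x \in J :\: I & indepD M (x |: I).
Proof.
move=> hI hJ lt.
case: (boolP [exists x in J :\: I, indepD M (x |: I)]).
  by case/exists_inP => x; exists x.
move=> /exists_inPn hall.
case/existsP: hJ => B /andP[/andP[hB /eqP eB] dJB].
set K := B :\: I.
have hK : indep M K by apply: indep_sub hB; apply: subsetDl.
have hKI : K \subset ~: I by rewrite /K setDE subsetIr.
case: (indep_extend hK hKI) => K' [hK' hKK' hK'I eK'].
have rI : rank M (~: I) = rank M setT by apply/eqP; rewrite -indepDE.
(* if x \in J :\: I avoided K', then K' would witness that x |: I is coindependent *)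
have JK' : J :\: I \subset K'.
  apply/subsetP => x xJI; apply/negPn/negP => xK'.
  have := hall x xJI; rewrite indepDE => /negP; apply.
  rewrite eqn_leq rank_leqT -rI -eK'; apply: indep_leq_rank hK' _.
  apply/subsetP => y yK'; rewrite setCU in_setI (subsetP hK'I y yK') andbT in_setC in_set1.
  by apply: contraNneq xK' => <-.
have dis : [disjoint J :\: I & K].
  exact: disjointW (subsetDl _ _) (subsetDl _ _) dJB.
have c2 : #|(J :\: I) :|: K| <= #|K'| by apply: subset_leq_card; rewrite subUset JK' hKK'.
rewrite cardsU (disjoint_setI0 dis) cards0 subn0 in c2.
(* #|J :\: I| + #|K| <= #|K'| = #|B| = #|B :&: I| + #|K|, and #|B :&: I| <= #|I :\: J| *)
have c4 : #|B :&: I| <= #|I :\: J|.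
  apply: subset_leq_card; apply/subsetP => x; rewrite !inE => /andP[xB ->].
  by move: dJB; rewrite andbT disjoint_sym disjoints_subset => /subsetP/(_ x xB); rewrite inE.
have := cardsID I B; have := cardsID J I; have := cardsID I J; rewrite (setIC J I) -/K.
lia.
Qed.

Definition dualM : matroid n := @Matroid n (indepD M) indepD0 indepD_sub indepD_aug.

End Dual.

(** * Fundamental circuits and internal activity *)

Section FundamentalCircuit.
Variables (n : nat) (M : matroid n) (B : {set 'I_n.+1}) (b : 'I_n.+1).
Hypotheses (hB : is_basis M B) (bB : b \notin B).
Local Notation T := 'I_n.+1.
Implicit Types (X Y C : {set T}) (x y : T).

Lemma basis_indep : indep M B. Proof. by case/andP: hB. Qed.
Lemma card_basis : #|B| = rank M setT. Proof. by case/andP: hB => _ /eqP. Qed.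

Lemma indepD_compl_basis X : X \subset ~: B -> indep (dualM M) X.
Proof. by move=> hX; apply/existsP; exists B; rewrite hB disjoints_subset. Qed.

(* The fundamental circuit C(B, b), as the elements of b |: B whose removal leaves a spanning set. *)
Definition fcircuit := [set x in b |: B | rank M ((b |: B) :\ x) == rank M setT].

Lemma card_setU1_basis : #|b |: B| = (rank M setT).+1.
Proof. by rewrite cardsU1 bB card_basis. Qed.

Lemma rank_setU1_basis : rank M (b |: B) = rank M setT.
Proof.
apply/anti_leq; rewrite rank_leqT /= -card_basis -(rank_indep basis_indep).
exact/rankS/subsetUr.
Qed.

Lemma b_in_fcircuit : b \in fcircuit.
Proof. by rewrite inE setU11 setU1K // (rank_indep basis_indep) card_basis /=. Qed.

Lemma clD_fcircuit x : (x \in clD M (~: B :\ b)) = (x \notin fcircuit).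
Proof.
set W := ~: B :\ b.
have hW : indep (dualM M) W by apply: indepD_compl_basis; apply: subD1set.
case: (boolP (x \in W)) => xW.
  rewrite (subsetP (sub_cl (dualM M) W) x xW) inE.
  by move: xW; rewrite !inE => /andP[/negPf -> /negPf ->].
have xZ : x \in b |: B by move: xW; rewrite in_setD1 in_setC negb_and !negbK in_setU1.
have coindepE : indep (dualM M) (x |: W) = (rank M ((b |: B) :\ x) == rank M setT).
  rewrite /= indepDE; congr (rank M _ == _); apply/setP => y; rewrite !inE.
  by case: (y == x); case: (y == b); case: (y \in B).
change (clD M W) with (cl (dualM M) W); rewrite clP (rank_indep hW) inE xZ -coindepE.
case: (boolP (indep (dualM M) (x |: W))) => hI.
  by rewrite rank_indep // cardsU1 xW add1n (gtn_eqF (ltnSn _)).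
have ne : rank (dualM M) (x |: W) != #|W|.+1.
  by apply: contra hI => /eqP e; apply: indep_rank_card; rewrite e cardsU1 xW.
have /andP[h1 h2] := rankU1 (dualM M) x W; rewrite (rank_indep hW) in h1 h2.
by rewrite eqn_leq h1 andbT -ltnS ltn_neqAle ne h2.
Qed.

(* Otherwise b |: Y extends to a basis of b |: B, which omits some element of fcircuit :&: B. *)
Lemma cl_fcircuit Y : Y \subset B -> fcircuit :&: B \subset Y -> b \in cl M Y.
Proof.
move=> hYB hDY.
have hY : indep M Y by apply: indep_sub basis_indep.
have bY : b \notin Y by apply: contra bB; apply: (subsetP hYB).
rewrite clP; apply/negPn/negP => /rankU1_neq e.
have hbY : indep M (b |: Y) by apply: indep_rank_card; rewrite e cardsU1 bY rank_indep.
case: (indep_extend hbY (setUS [set b] hYB)) => J [hJ hbJ hJZ eJ].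
have /subsetPn[x xZ xJ] : ~~ (b |: B \subset J).
  by apply/negP => /subset_leq_card; rewrite card_setU1_basis eJ rank_setU1_basis ltnn.
have xD : x \in fcircuit.
  rewrite inE xZ /=; apply/eqP/anti_leq; rewrite rank_leqT /= -rank_setU1_basis -eJ.
  apply: indep_leq_rank hJ _; apply/subsetP => y yJ; rewrite in_setD1 (subsetP hJZ y yJ) andbT.
  by apply: contraNneq xJ => <-.
have xb : x != b by apply: contraNneq xJ => ->; apply: (subsetP hbJ); apply: setU11.
have xB : x \in B by move: xZ; rewrite in_setU1 (negPf xb).
have xY : x \in Y by apply: (subsetP hDY); rewrite inE xD xB.
by rewrite (subsetP hbJ x (setU1r _ xY)) in xJ.
Qed.

(* A maximal independent subset of (b |: B) :\ x through C :\ x that did not span could be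
   augmented from B, and not by x since C is dependent. *)
Lemma circuit_sub_fcircuit C : C \subset b |: B -> circuit M C -> C \subset fcircuit.
Proof.
move=> hCZ /andP[hC /forall_inP hCi].
apply/subsetP => x xC; case: (x =P b) => [->|/eqP xb]; first exact: b_in_fcircuit.
rewrite inE (subsetP hCZ x xC) /=; apply/eqP/anti_leq; rewrite rank_leqT /=.
case: (indep_extend (hCi _ (properD1 xC)) (setSD [set x] hCZ)) => J [hJ hCJ hJZ eJ].
rewrite -eJ leqNgt; apply/negP => lt; rewrite -card_basis in lt.
case: (indep_aug hJ basis_indep lt) => y /setDP[yB yJ] hyJ.
case: (y =P x) => [yx|/eqP yx].
  move/negP: hC; apply; apply: indep_sub hyJ; apply/subsetP => z zC.
  rewrite in_setU1; case: (z =P y) => //= /eqP zy.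
  by apply: (subsetP hCJ); rewrite in_setD1 zC andbT -yx.
have : y |: J \subset (b |: B) :\ x by rewrite subUset hJZ andbT sub1set in_setD1 yx setU1r.
by move/(indep_leq_rank hyJ); rewrite cardsU1 yJ add1n eJ ltnn.
Qed.

(* The circuit of b |: B lies inside fcircuit, and b is not its least element. *)
Lemma fcircuit_lt : b \notin EA M B -> exists2 a, a \in fcircuit & (a \in B) && (a < b).
Proof.
move=> bEA; apply/exists_inP; apply: contraNT bEA => /exists_inPn hall.
have hZ : ~~ indep M (b |: B).
  by apply/negP => /rank_indep; rewrite rank_setU1_basis card_setU1_basis; lia.
case: (exists_circuit hZ) => C hCZ hCcirc; have hC : circuit M C := hCcirc.
have CD := circuit_sub_fcircuit hCZ hC.
have bC : b \in C.
  apply/negPn/negP => bC; case/andP: hC => /negP hdep _; apply: hdep.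
  apply: indep_sub basis_indep.
  apply/subsetP => y yC; move: (subsetP hCZ y yC); rewrite in_setU1.
  by case/predU1P => // yb; rewrite -yb yC in bC.
rewrite inE in_setC bB /=; apply/existsP; exists C; rewrite hC bC setUC hCZ /=.
apply/forall_inP => y yC; case: (y =P b) => [->//|/eqP yb].
have yB : y \in B by move: (subsetP hCZ y yC); rewrite in_setU1 (negPf yb).
by move: (hall y (subsetP CD y yC)); rewrite yB /= -leqNgt.
Qed.

End FundamentalCircuit.

Lemma IA_of_lt_compl (n : nat) (M : matroid n) (B : {set 'I_n.+1}) a :
  is_basis M B -> a \in B -> (forall y, y \notin B -> a < y) -> a \in IA M B.
Proof.
move=> hB aB alt; set W := ~: B :|: [set a].
have hW : ~~ indepD M W.
  apply/negP => /existsP[B' /andP[/andP[hB' /eqP eB'] dis]].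
  have : B' \subset B :\ a.
    apply/subsetP => y yB'; move: dis; rewrite disjoint_sym disjoints_subset.
    by move/subsetP/(_ y yB'); rewrite !inE negb_or negbK andbC.
  move/subset_leq_card; rewrite eB' -(card_basis hB) (cardsD1 a B) aB; lia.
case: (exists_circuit hW) => C hCW hCcirc; have /andP[hC _] := hCcirc.
have aC : a \in C.
  apply/negPn/negP => aC; move/negP: hC; apply; apply: indepD_sub (indepD_compl_basis hB (subxx _)).
  apply/subsetP => y yC; move: (subsetP hCW y yC); rewrite !inE.
  by case/orP => // /eqP ya; rewrite -ya yC in aC.
rewrite inE aB; apply/existsP; exists C; rewrite (hCcirc : cocircuit M C) hCW aC /=.
apply/forall_inP => y yC; move: (subsetP hCW y yC); rewrite !inE.
by case/orP => [/alt/ltnW|/eqP ->].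
Qed.

(** * Levels of biflats *)

Section Level.
Variables (n : nat) (M : matroid n).
Local Notation T := 'I_n.+1.

Definition level (p : {set T} * {set T}) :=
  rank M p.1 + rank (dualM M) setT - rank (dualM M) p.2.

Lemma level_le p q : biflat M p -> biflat M q -> p.1 \subset q.1 -> q.2 \subset p.2 ->
  level p <= level q /\ (level p = level q -> p = q).
Proof.
case/and5P=> fp1 _ _ _ _ /and5P[_ fq2 _ _ _] h1 h2.
have r1 := rankS M h1; have r2 := rankS (dualM M) h2.
have := rank_leqT (dualM M) p.2; have := rank_leqT (dualM M) q.2.
rewrite /level => b1 b2; split; first lia.
move=> e; have e1 : rank M q.1 <= rank M p.1 by lia.
have e2 : rank (dualM M) p.2 <= rank (dualM M) q.2 by lia.
have E1 := flat_eq fp1 h1 e1; have E2 := flat_eq (M := dualM M) fq2 h2 e2.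
by case: p q E1 E2 {fp1 fq2 h1 h2 r1 r2 b1 b2 e e1 e2} => [p1 p2] [q1 q2] /= -> ->.
Qed.

Lemma level_inj p q : biflat M p -> biflat M q -> compatible p q -> level p = level q -> p = q.
Proof.
move=> hp hq /orP[/andP[h1 h2]|/andP[h1 h2]] e; first exact: (level_le hp hq h1 h2).2.
by apply/esym; apply: (level_le hq hp h1 h2).2.
Qed.

Lemma level_lt p q : biflat M p -> biflat M q -> compatible p q -> level p < level q ->
  p.1 \subset q.1 /\ q.2 \subset p.2.
Proof.
move=> hp hq /orP[/andP[h1 h2]|/andP[h1 h2]] lt //.
by have := (level_le hq hp h1 h2).1; lia.
Qed.

End Level.

Section Sequences.
Variable n : nat.
Local Notation T := 'I_n.+1.
Implicit Types (s : seq T).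

Lemma nth_sorted_geq s p q : sorted (fun x y : T => y <= x) s -> uniq s ->
  p < q -> q < size s -> nth ord0 s q < nth ord0 s p.
Proof.
move=> hs us pq qs; have ps : p < size s by lia.
have tr : transitive (fun x y : T => y <= x) by move=> x y z h1 h2; apply: leq_trans h2 h1.
rewrite ltn_neqAle (sorted_ltn_nth tr ord0 hs) // andbT.
by rewrite (inj_eq (@ord_inj _)) nth_uniq // eq_sym (ltn_eqF pq).
Qed.

Lemma card_sset s : uniq s -> #|sset s| = size s.
Proof. by move=> us; rewrite cardsE; apply/card_uniqP. Qed.

Lemma sset_cat s1 s2 : sset (s1 ++ s2) = sset s1 :|: sset s2.
Proof. by apply/setP => x; rewrite !inE mem_cat. Qed.

End Sequences.

Lemma exists_min_ord (n : nat) (P : pred 'I_n.+1) y0 :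
  P y0 -> exists2 m, P m & forall y, P y -> m <= y.
Proof. by move=> Py0; case: (arg_minnP (P := P) val Py0) => m Pm mmin; exists m. Qed.

Lemma exists_notin_basis (n : nat) (M : matroid n) (B : {set 'I_n.+1}) :
  (forall x, ~ is_coloop M x) -> is_basis M B -> exists y, y \notin B.
Proof.
move=> nocoloop hB; apply/existsP; apply: contraT => /existsPn hall.
have BT : B = setT by apply/setP => y; rewrite inE; apply/negbNE/hall.
case: (nocoloop ord0) => B' hB'.
have /eqP -> : B' == setT by rewrite eqEcard subsetT -{1}BT (card_basis hB) (card_basis hB') leqnn.
by rewrite inE.
Qed.

(** * The biflag of an nbc basis *)

Section Main.
Variables (n r k : nat) (M : matroid n).
Hypothesis noloop : forall x, ~ is_loop M x.
Hypothesis nocoloop : forall x, ~ is_coloop M x.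
Hypothesis hrank : rank M setT = r.+1.
Variable B : {set 'I_n.+1}.
Hypothesis hB : nbc_basis M B.
Hypothesis hk : #|IA M B| = k.+1.
Variable b0 : 'I_n.+1.
Hypothesis b0nB : b0 \notin B.
Hypothesis b0min : forall y, y \notin B -> b0 <= y.
Local Notation T := 'I_n.+1.
Local Notation MD := (dualM M).
Local Notation D := (fcircuit M B b0).
Implicit Types (X Y : {set T}) (x y : T).

Lemma B_basis : is_basis M B. Proof. by case/andP: hB. Qed.
Lemma B_indep : indep M B. Proof. exact: basis_indep B_basis. Qed.
Lemma card_B : #|B| = r.+1. Proof. by rewrite (card_basis B_basis). Qed.

Lemma indep1 x : indep M [set x].
Proof. by apply: contraT => /(@noloop x). Qed.

Lemma indepD1 x : indep MD [set x].
Proof.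
have /existsP[B' /andP[hB' xB']] : [exists B', is_basis M B' && (x \notin B')].
  apply: contraT => /existsPn hall; case: (@nocoloop x) => B' hB'.
  by move: (hall B'); rewrite hB' negbK.
by apply/existsP; exists B'; rewrite hB' disjoints_subset sub1set inE.
Qed.

Lemma rankD_setT : rank MD setT = n - r.
Proof.
apply/anti_leq/andP; split.
  case: (exists_indep_rank MD setT) => I /andP[/existsP[B' /andP[/andP[_ /eqP eB'] dis]] _] <-.
  rewrite disjoints_subset in dis; have := subset_leq_card dis; have := cardsC B'.
  by rewrite card_ord eB' hrank; lia.
have := indep_leq_rank (indepD_compl_basis B_basis (subxx _)) (subsetT (~: B)).
by have := cardsC B; rewrite card_ord card_B; lia.
Qed.

Lemma cl0 : cl M set0 = set0. Proof. exact: cl0_loopless indep1. Qed.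
Lemma clD0 : clD M set0 = set0. Proof. exact: (cl0_loopless (M := MD)) indepD1. Qed.

Lemma T_B_E : T_B B = ~: B :\ b0.
Proof.
apply/setP => x; rewrite !inE; case: (boolP (x \in B)) => xB; rewrite ?andbF ?andbT //.
apply/existsP/idP => [[y /andP[yB lt]]|xb].
  by apply: contraTneq lt => ->; rewrite -leqNgt b0min // -in_setC.
exists b0; rewrite inE b0nB ltn_neqAle b0min // andbT.
by apply: contra_neq xb => /val_inj.
Qed.

Lemma clD_T_B x : (x \in clD M (T_B B)) = (x \notin D).
Proof. by rewrite T_B_E clD_fcircuit // B_basis. Qed.

Lemma indepD_T_B : indep MD (T_B B).
Proof. by apply: (indepD_compl_basis B_basis); rewrite T_B_E subD1set. Qed.

Lemma card_T_B : #|T_B B| = n - r.+1.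
Proof.
rewrite T_B_E; have := cardsD1 b0 (~: B); have := cardsC B.
by rewrite inE b0nB card_ord card_B /=; set_lia.
Qed.

Lemma rank_clD_T_B : rank MD (clD M (T_B B)) = n - r.+1.
Proof. by rewrite (rank_cl MD) rank_indep ?card_T_B // indepD_T_B. Qed.

Lemma IA_B : IA M B \subset B.
Proof. by apply/subsetP => x; rewrite inE => /andP[]. Qed.

Lemma k_le_r : k <= r.
Proof. by have := subset_leq_card IA_B; rewrite hk card_B. Qed.

Lemma r_lt_n : r < n.
Proof.
have := cardsC B; rewrite card_ord card_B.
have : 0 < #|~: B| by apply/card_gt0P; exists b0; rewrite inE.
lia.
Qed.

Lemma cseq_uniq : uniq (cseq M B).
Proof. by rewrite sort_uniq enum_uniq. Qed.
Lemma mem_cseq x : (x \in cseq M B) = (x \in IA M B).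
Proof. by rewrite mem_sort mem_enum. Qed.
Lemma size_cseq : size (cseq M B) = k.+1.
Proof. by rewrite size_sort -cardE hk. Qed.
Lemma cseq_sorted : sorted (fun x y : T => y <= x) (cseq M B).
Proof. by apply: sort_sorted => x y; apply: leq_total. Qed.

Lemma cseq_index_lt x y : x \in IA M B -> y \in IA M B ->
  index x (cseq M B) < index y (cseq M B) -> y < x.
Proof.
rewrite -!mem_cseq => xI yI lt; rewrite -(nth_index ord0 xI) -(nth_index ord0 yI).
by apply: nth_sorted_geq cseq_sorted cseq_uniq lt _; rewrite index_mem.
Qed.

Lemma cseq_index_le x y : x \in IA M B -> y \in IA M B -> x <= y ->
  index y (cseq M B) <= index x (cseq M B).
Proof. by move=> xI yI; apply: contraTT; rewrite -!ltnNge; apply: cseq_index_lt. Qed.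

Lemma c_IA j : 1 <= j <= k.+1 -> c M B j \in IA M B.
Proof. by move=> hj; rewrite -mem_cseq; apply: mem_nth; rewrite size_cseq; lia. Qed.

Lemma index_c j : 1 <= j <= k.+1 -> index (c M B j) (cseq M B) = j.-1.
Proof. by move=> hj; rewrite index_uniq ?cseq_uniq // size_cseq; lia. Qed.

Lemma mem_cfirst x m : (x \in cfirst M B m) = (x \in IA M B) && (index x (cseq M B) < m).
Proof.
rewrite inE -mem_cseq; case: (boolP (x \in cseq M B)) => xI; first exact: in_take.
by apply/negP => /mem_take; rewrite (negPf xI).
Qed.

Lemma card_S_B : #|S_B M B| = r - k.
Proof. by rewrite cardsD (setIidPr IA_B) card_B hk. Qed.

Lemma S_cfirst_sub m : S_B M B :|: cfirst M B m \subset B.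
Proof.
rewrite subUset subsetDl; apply/subsetP => x; rewrite mem_cfirst => /andP[xI _].
exact: (subsetP IA_B).
Qed.

Lemma card_S_cfirst m : #|S_B M B :|: cfirst M B m| = r - k + minn m k.+1.
Proof.
rewrite cardsU card_S_B /cfirst card_sset ?take_uniq ?cseq_uniq // size_take_min size_cseq.
suff -> : S_B M B :&: cfirst M B m = set0 by rewrite cards0 subn0.
by apply/setP => x; rewrite in_set0 in_setI mem_cfirst in_setD; case: (x \in IA M B); rewrite ?andbF.
Qed.

Lemma rank_cl_S_cfirst m : rank M (cl M (S_B M B :|: cfirst M B m)) = r - k + minn m k.+1.
Proof. by rewrite rank_cl rank_indep ?card_S_cfirst // (indep_sub (S_cfirst_sub m) B_indep). Qed.

Variable a0 : T.
Hypothesis a0IA : a0 \in IA M B.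
Hypothesis a0D : a0 \in D.
Hypothesis a0min : forall y, y \in IA M B -> y \in D -> a0 <= y.

Definition i0 := (index a0 (cseq M B)).+1.

Lemma i0_range : 1 <= i0 <= k.+1.
Proof. by rewrite /i0 ltnS -size_cseq index_mem mem_cseq a0IA. Qed.

Lemma c_i0 : c M B i0 = a0.
Proof. by rewrite /c /i0 /= nth_index // mem_cseq. Qed.

Local Notation cover m := (cl M (S_B M B :|: cfirst M B m) :|: clD M (T_B B)).

Lemma a0_notin_cover m : m < i0 -> a0 \notin cover m.
Proof.
move=> lt; rewrite in_setU clD_T_B a0D orbF.
apply: (indep_notin_cl B_indep (S_cfirst_sub m)); first exact: (subsetP IA_B).
by rewrite in_setU mem_cfirst in_setD a0IA /= -leqNgt.
Qed.

Lemma cover_full m : i0 <= m -> cover m = setT.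
Proof.
move=> le; apply/setP => x; rewrite in_setT in_setU clD_T_B.
case: (boolP (x \in D)) => xD; rewrite ?orbT // orbF.
have DY : D :&: B \subset S_B M B :|: cfirst M B m.
  apply/subsetP => y /setIP[yD yB]; rewrite in_setU in_setD yB andbT.
  case: (boolP (y \in IA M B)) => //= yI.
  have := cseq_index_le a0IA yI (a0min yI yD).
  by rewrite mem_cfirst yI /=; rewrite /i0 in le; lia.
have := xD; rewrite inE in_setU1 => /andP[/orP[/eqP ->|xB] _].
  by apply: (cl_fcircuit B_basis b0nB (S_cfirst_sub m)).
by apply: (subsetP (sub_cl _ _)); apply: (subsetP DY); rewrite inE xD xB.
Qed.

Lemma c_i0_notin : c M B i0 \notin cl M (S_B M B) :|: clD M (T_B B).
Proof.
rewrite c_i0; apply: contra (a0_notin_cover (proj1 (andP i0_range))).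
by rewrite !in_setU => /orP[/(subsetP (clS M (subsetUl _ _)))->|->]; rewrite ?orbT.
Qed.

Lemma c_after_i0 j : i0 < j <= k.+1 -> c M B j \in cl M (S_B M B) :|: clD M (T_B B).
Proof.
move=> hj; have jr : 1 <= j <= k.+1 by have := i0_range; lia.
rewrite in_setU clD_T_B; apply/orP; right; apply/negP => cD.
have := a0min (c_IA jr) cD; rewrite leqNgt => /negP; apply.
by apply: cseq_index_lt (c_IA jr) _ => //; rewrite index_c //; rewrite /i0 in hj; lia.
Qed.

Lemma cover_before_i0 j : 1 <= j < i0 -> cover j != setT.
Proof. by case/andP=> _ /a0_notin_cover; apply: contraNneq => ->; rewrite in_setT. Qed.

(* The only level in 1..n not attained by the pairs F^+_j | G^+_j. *)
Definition gap := r - k + i0.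

Lemma gap_range : r - k < gap <= r.+1.
Proof. by have := i0_range; have := k_le_r; rewrite /gap; lia. Qed.

Definition Sseq := sort (fun x y : T => y <= x) (enum (S_B M B)).
Definition Tseq := sort (fun x y : T => x <= y) (enum (T_B B)).
Definition Bseq := Sseq ++ cseq M B.

Lemma Sseq_uniq : uniq Sseq. Proof. by rewrite sort_uniq enum_uniq. Qed.
Lemma Tseq_uniq : uniq Tseq. Proof. by rewrite sort_uniq enum_uniq. Qed.
Lemma mem_Sseq x : (x \in Sseq) = (x \in S_B M B). Proof. by rewrite mem_sort mem_enum. Qed.
Lemma mem_Tseq x : (x \in Tseq) = (x \in T_B B). Proof. by rewrite mem_sort mem_enum. Qed.
Lemma size_Sseq : size Sseq = r - k. Proof. by rewrite size_sort -cardE card_S_B. Qed.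
Lemma size_Tseq : size Tseq = n - r.+1. Proof. by rewrite size_sort -cardE card_T_B. Qed.
Lemma sset_Sseq : sset Sseq = S_B M B. Proof. by apply/setP => x; rewrite inE mem_Sseq. Qed.
Lemma sset_Tseq : sset Tseq = T_B B. Proof. by apply/setP => x; rewrite inE mem_Tseq. Qed.

Lemma Bseq_uniq : uniq Bseq.
Proof.
rewrite cat_uniq Sseq_uniq cseq_uniq andbT; apply/hasPn => x.
by rewrite mem_cseq mem_Sseq in_setD => ->.
Qed.

Lemma size_Bseq : size Bseq = r.+1.
Proof. by rewrite size_cat size_Sseq size_cseq; have := k_le_r; lia. Qed.

Lemma take_Bseq_sub j : sset (take j Bseq) \subset B.
Proof.
apply/subsetP => x; rewrite inE => /mem_take; rewrite mem_cat mem_Sseq mem_cseq.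
by case/orP => [/setDP[]|/(subsetP IA_B)].
Qed.

Lemma take_Bseq_ge j : r - k <= j -> sset (take j Bseq) = S_B M B :|: cfirst M B (j - (r - k)).
Proof. by move=> h; rewrite take_cat size_Sseq ltnNge h sset_cat sset_Sseq. Qed.

Lemma take_eseq j : j <= r - k -> take j (eseq M B) = take j Bseq.
Proof.
move=> h; rewrite !take_cat size_Sseq; case: ltnP => // h'.
have -> : j - (r - k) = 0 by lia.
by rewrite !take0.
Qed.

Lemma rank_take_Bseq j : rank M (cl M (sset (take j Bseq))) = minn j r.+1.
Proof.
rewrite rank_cl rank_indep; last exact: indep_sub (take_Bseq_sub j) B_indep.
by rewrite card_sset ?take_uniq ?Bseq_uniq // size_take_min size_Bseq.
Qed.

Lemma flat_rank_r1 X : flat M X -> rank M X = r.+1 -> X = setT.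
Proof. by rewrite -hrank; apply: flat_rank_setT. Qed.

Local Notation FG j := (FGplus M B r k i0 j).

Lemma FG1 j : (FG j).1 = cl M (sset (take j Bseq)).
Proof.
rewrite /FGplus; case: ifP => h1 /=; first by rewrite take_eseq.
case: ifP => h2 /=; first by rewrite take_Bseq_ge //; lia.
apply/esym/flat_rank_r1; first exact: flat_cl.
by rewrite rank_take_Bseq; apply/minn_idPr; lia.
Qed.

Lemma FG1_ge j : r - k <= j -> (FG j).1 = cl M (S_B M B :|: cfirst M B (j - (r - k))).
Proof. by move=> h; rewrite FG1 take_Bseq_ge. Qed.

(* {e_(j-k), ..., e_(n-k-1)} for j > r, and all of T_B otherwise *)
Definition Ttail j := sset (drop (maxn j r.+1 - r.+1) Tseq).

Lemma Ttail_sub j : Ttail j \subset T_B B.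
Proof. by apply/subsetP => x; rewrite inE => /mem_drop; rewrite mem_Tseq. Qed.

Lemma Ttail_small j : j <= r.+1 -> Ttail j = T_B B.
Proof. by move=> h; rewrite /Ttail (maxn_idPr h) subnn drop0 sset_Tseq. Qed.

Lemma rank_clD_Ttail j : rank MD (clD M (Ttail j)) = n - r.+1 - (maxn j r.+1 - r.+1).
Proof.
rewrite (rank_cl MD) rank_indep; last exact: indep_sub (Ttail_sub j) indepD_T_B.
by rewrite card_sset ?drop_uniq ?Tseq_uniq // size_drop size_Tseq.
Qed.

Lemma FG2 j : (FG j).2 = if j < gap then setT else clD M (Ttail j).
Proof.
have := gap_range; have := k_le_r; have := i0_range; rewrite /gap => hi hkr hs.
rewrite /FGplus; case: ifP => h1 /=; first by rewrite ifT //; lia.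
case: ifP => h2 /=.
  by rewrite Ttail_small; last lia; case: ifP; case: ifP => //; lia.
rewrite ifF; last lia.
rewrite /Ttail drop_cat size_Sseq ifF; last lia.
by congr (clD M (sset (drop _ Tseq))); lia.
Qed.

Lemma level_FG j : 1 <= j <= n.-1 -> level M (FG j) = if j < gap then j else j.+1.
Proof.
move=> hj; have := gap_range; have := r_lt_n; rewrite /gap => hn hs.
rewrite /level FG1 FG2 rank_take_Bseq rankD_setT /gap; case: ifP => js.
  by rewrite rankD_setT; lia.
by have := rank_clD_Ttail j; set_lia.
Qed.

Lemma r1_lt_n : gap <= n.-1 -> r.+1 < n.
Proof.
move=> hs; have := r_lt_n; rewrite leq_eqVlt => /orP[/eqP e|//].
have T0 : T_B B = set0 by apply: cards0_eq; rewrite card_T_B -e subnn.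
have := cover_full (leqnn i0); rewrite T0 clD0 setU0 => hF.
have := rank_cl_S_cfirst i0; rewrite hF hrank.
by have := i0_range; rewrite /gap in hs; lia.
Qed.

Lemma FG1_neq0 j : 1 <= j -> (FG j).1 != set0.
Proof. by move=> hj; apply: (set0_rank_gt0 (M := M)); rewrite FG1 rank_take_Bseq leq_min hj. Qed.

Lemma FG2_neq0 j : j <= n.-1 -> (FG j).2 != set0.
Proof.
rewrite FG2; case: ifP => [_ _|]; first by apply/set0Pn; exists ord0; rewrite inE.
move/negbT; rewrite -leqNgt => js jn; have hgt := r1_lt_n (leq_trans js jn).
by apply: (set0_rank_gt0 (M := MD)); rewrite rank_clD_Ttail; lia.
Qed.

Lemma FG_not_full j : j <= n.-1 -> ~~ (((FG j).1 == setT) && ((FG j).2 == setT)).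
Proof.
move=> jn; have := gap_range => hs.
case: (leqP j r) => jr; apply/negP => /andP[/eqP e1 /eqP e2].
  by move: (rank_take_Bseq j); rewrite -FG1 e1 hrank; lia.
move: e2 (rank_clD_Ttail j); rewrite FG2 ifF; last by apply/negbTE; rewrite -leqNgt; lia.
by move=> ->; rewrite rankD_setT; lia.
Qed.

Lemma FG_cover j : (FG j).1 :|: (FG j).2 = setT.
Proof.
rewrite FG2; case: ifP => [_|/negbT]; first by rewrite setUT.
rewrite -leqNgt /gap => js; case: (leqP j r) => jr.
  by rewrite Ttail_small ?(leqW jr) // FG1_ge ?cover_full //; lia.
by rewrite FG1 (flat_rank_r1 (flat_cl _ _)) ?setTU // rank_take_Bseq; apply/minn_idPr.
Qed.

Lemma FG_biflat j : 1 <= j <= n.-1 -> biflat M (FG j).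
Proof.
case/andP=> j1 jn; rewrite /biflat FG1_neq0 // FG2_neq0 // FG_not_full // FG_cover eqxx.
have -> : flatD M (FG j).2 by rewrite FG2; case: ifP => _; [exact: (flat_setT MD) | exact: (flat_cl MD)].
by rewrite FG1 flat_cl.
Qed.

Lemma FG_mono j j' : j <= j' -> (FG j).1 \subset (FG j').1 /\ (FG j').2 \subset (FG j).2.
Proof.
move=> jj; split.
  rewrite !FG1; apply: clS; apply/subsetP => x; rewrite !inE.
  by rewrite -(take_takel _ jj) => /mem_take.
rewrite !FG2; case: ifP => h1; first by rewrite ifT //; lia.
case: ifP => h2; first exact: subsetT.
apply: (clS MD); apply/subsetP => x; rewrite !inE.
set d := maxn j r.+1 - r.+1; set d' := maxn j' r.+1 - r.+1.
have -> : d' = (d' - d) + d by rewrite /d /d'; lia.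
by rewrite -drop_drop => /mem_drop.
Qed.

Lemma FG_compatible j j' : compatible (FG j) (FG j').
Proof.
rewrite /compatible; case: (leqP j j') => h; first by case: (FG_mono h) => -> ->.
by case: (FG_mono (ltnW h)) => -> ->; rewrite orbT.
Qed.

Definition Flo := cl M (S_B M B :|: cfirst M B i0.-1).
Definition Fhi := cl M (S_B M B :|: cfirst M B i0).

Lemma rank_Flo : rank M Flo = gap.-1.
Proof. by rewrite rank_cl_S_cfirst /gap; have := i0_range; lia. Qed.

Lemma rank_Fhi : rank M Fhi = gap.
Proof. by rewrite rank_cl_S_cfirst /gap; have := i0_range; lia. Qed.

Lemma FG_pre_gap : FG gap.-1 = (Flo, setT).
Proof.
have eg : gap = r - k + i0 by [].
have := gap_range; have := i0_range => hi hs.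
rewrite [FG _]surjective_pairing FG1_ge ?FG2 ?ifT /Flo; try lia.
by have -> : gap.-1 - (r - k) = i0.-1 by lia.
Qed.

Lemma FG_gap : FG gap = (Fhi, clD M (T_B B)).
Proof.
have eg : gap = r - k + i0 by [].
have := gap_range; have := i0_range => hi hs.
rewrite [FG _]surjective_pairing FG1_ge ?FG2 ?ltnn ?Ttail_small /Fhi; try lia.
by have -> : gap - (r - k) = i0 by lia.
Qed.

Lemma FG_diag_sub j : (FG j).1 :&: (FG j).2 \subset Flo :|: clD M (T_B B).
Proof.
rewrite FG2; case: ifP => js.
  rewrite setIT; apply: subset_trans (subsetUl _ _).
  have jg : j <= gap.-1 by lia.
  by case: (FG_mono jg); rewrite FG_pre_gap.
apply: subset_trans (subsetIr _ _) _; apply: subset_trans (subsetUr _ _).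
exact: (clS MD (Ttail_sub j)).
Qed.

Definition chain := [set FG j.+1 | j : 'I_n.-1].

Lemma mem_chain p : p \in chain -> exists2 j, 1 <= j <= n.-1 & p = FG j.
Proof. by case/imsetP => j _ ->; exists j.+1 => //; rewrite ltn_ord. Qed.

Lemma FG_in_chain j : 1 <= j <= n.-1 -> FG j \in chain.
Proof.
move=> hj; have hj' : j.-1 < n.-1 by lia.
have -> : j = (Ordinal hj').+1 by rewrite /=; lia.
by apply: imset_f; rewrite inE.
Qed.

Lemma a0_notin_Flo : a0 \notin Flo :|: clD M (T_B B).
Proof. by apply: a0_notin_cover; have := i0_range; lia. Qed.

Lemma chain_biflag : biflag M chain.
Proof.
apply/and3P; split.
- by apply/forall_inP => p /mem_chain[j hj ->]; apply: FG_biflat.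
- apply/forall_inP => p /mem_chain[j _ ->]; apply/forall_inP => q /mem_chain[j' _ ->].
  exact: FG_compatible.
- apply: contra a0_notin_Flo => /eqP e; apply: (subsetP _ a0 (in_setT a0)); rewrite -e.
  by apply/bigcupsP => p /mem_chain[j _ ->]; apply: FG_diag_sub.
Qed.

Lemma card_chain : #|chain| = n.-1.
Proof.
rewrite card_imset ?cardsT ?card_ord // => j1 j2 e; apply: val_inj => /=.
have := congr1 (level M) e; rewrite !level_FG ?ltn_ord //.
by case: ifP; case: ifP; lia.
Qed.

Lemma biflat_ranks p : biflat M p ->
  [/\ 0 < rank M p.1, rank M p.1 <= r.+1, 0 < rank MD p.2 & rank MD p.2 <= n - r].
Proof.
case/and5P => _ _ /set0Pn[x xp1] /set0Pn[y yp2] _; rewrite -hrank -rankD_setT !rank_leqT.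
by split => //; [apply: rank_gt0 (indep1 x) xp1 | apply: rank_gt0 (indepD1 y) yp2].
Qed.

Lemma clD_T_B_sub_diag : clD M (T_B B) \subset \bigcup_(p in chain) (p.1 :&: p.2).
Proof.
have := r_lt_n; case: (leqP r.+1 n.-1) => rn hn.
  have hj : 1 <= r.+1 <= n.-1 by lia.
  apply: subset_trans (bigcup_sup _ (FG_in_chain hj)).
  rewrite FG2 ifF; last by apply/negbTE; rewrite -leqNgt; case/andP: gap_range.
  by rewrite Ttail_small // FG1 (flat_rank_r1 (flat_cl _ _)) ?setTI // rank_take_Bseq minnn.
have T0 : T_B B = set0 by apply: cards0_eq; rewrite card_T_B; lia.
by rewrite T0 clD0 sub0set.
Qed.

Section Extension.
Variables F G : {set T}.
Hypotheses (hq : biflat M (F, G)) (hcomp : forall p, p \in chain -> compatible p (F, G)).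
Hypothesis q_notin : (F, G) \notin chain.

Lemma level_extension : level M (F, G) = gap.
Proof.
have := gap_range; have := r_lt_n => hn hs.
have [/= q1 q2 q3 q4] := biflat_ranks hq.
have level_neq j : 1 <= j <= n.-1 -> level M (FG j) != level M (F, G).
  move=> hj; apply: contraNneq q_notin => /(level_inj (FG_biflat hj) hq) <-.
    exact: FG_in_chain.
  exact: hcomp (FG_in_chain hj).
have hl : 0 < level M (F, G) <= n by rewrite /level /= rankD_setT; lia.
apply/eqP; rewrite eqn_leq; apply/andP; split; rewrite leqNgt; apply/negP => lt.
  have hj : 1 <= (level M (F, G)).-1 <= n.-1 by lia.
  move: (level_neq _ hj); rewrite level_FG // ifF; last by apply/negbTE; rewrite -leqNgt; lia.
  by rewrite prednK ?eqxx //; lia.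
have hj : 1 <= level M (F, G) <= n.-1 by lia.
by move: (level_neq _ hj); rewrite level_FG // lt eqxx.
Qed.

Lemma Flo_sub : Flo \subset F.
Proof.
have eg : gap = r - k + i0 by [].
have := gap_range; have := r_lt_n; have := i0_range => hi hn hs.
case: (leqP gap 1) => s1.
  rewrite /Flo; suff -> : S_B M B :|: cfirst M B i0.-1 = set0 by rewrite cl0 sub0set.
  by apply: cards0_eq; rewrite card_S_cfirst; lia.
have hj : 1 <= gap.-1 <= n.-1 by lia.
have lt : level M (FG gap.-1) < level M (F, G) by rewrite level_FG // level_extension ifT; lia.
by case: (level_lt (FG_biflat hj) hq (hcomp (FG_in_chain hj)) lt); rewrite FG_pre_gap.
Qed.

Lemma sub_Fhi : F \subset Fhi /\ clD M (T_B B) \subset G.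
Proof.
have := gap_range; have := r_lt_n => hn hs.
case: (leqP gap n.-1) => sn.
  have hj : 1 <= gap <= n.-1 by lia.
  have lt : level M (F, G) < level M (FG gap) by rewrite level_FG // ltnn level_extension.
  have hc : compatible (F, G) (FG gap) by rewrite /compatible orbC; apply: hcomp (FG_in_chain hj).
  by case: (level_lt hq (FG_biflat hj) hc lt); rewrite FG_gap.
have T0 : T_B B = set0 by apply: cards0_eq; rewrite card_T_B; lia.
rewrite T0 clD0 sub0set (_ : Fhi = setT) ?subsetT //.
by apply: flat_rank_r1; [apply: flat_cl | rewrite rank_Fhi; lia].
Qed.

Lemma extension_eq : (F, G) = (Fhi, setT).
Proof.
have [/= _ _ _ q4] := biflat_ranks hq.
have := level_extension; rewrite /level /= rankD_setT => hlev.
have {hlev q4} hlev : rank M F + (n - r) = gap + rank MD G by lia.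
have [up1 up2] := sub_Fhi.
have := rankS M Flo_sub; have := rankS M up1; rewrite rank_Flo rank_Fhi => ur lr.
case/and5P: hq => /= fF fG _ _ /andP[_ /eqP hFG].
case: (leqP gap (rank M F)) => c1.
  have eF : rank M F = gap by apply/eqP; rewrite eqn_leq ur c1.
  have E1 : F = Fhi by apply: flat_eq fF up1 _; rewrite rank_Fhi eF.
  have E2 : G = setT.
    apply: (flat_rank_setT (M := MD) fG); rewrite rankD_setT.
    by move: hlev; rewrite eF => /addnI.
  by rewrite E1 E2.
have E1 : Flo = F.
  by apply: flat_eq Flo_sub _; [apply: flat_cl | rewrite rank_Flo; clear -c1; lia].
have E2 : clD M (T_B B) = G.
  apply: (flat_eq (M := MD)) up2 _; first exact: (flat_cl MD).
  have := gap_range; have := r_lt_n; rewrite rank_clD_T_B.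
  by clear -hlev c1 lr; lia.
by move: a0_notin_Flo; rewrite E1 E2 hFG in_setT.
Qed.

End Extension.

Lemma chain_max Q : biflag M Q -> chain \subset Q -> Q = chain.
Proof.
move=> hQ PQ; apply/eqP; rewrite eqEsubset PQ andbT; apply/subsetP => -[F G] qQ.
apply/negPn/negP => q_notin.
case/and3P: hQ => /forall_inP hb /forall_inP hc; apply/negP; rewrite negbK.
have hcomp p : p \in chain -> compatible p (F, G) by move/(subsetP PQ)/hc/forall_inP; apply.
have [EF EG] := extension_eq (hb _ qQ) hcomp q_notin.
rewrite eqEsubset subsetT /= -(cover_full (leqnn i0)) subUset; apply/andP; split.
  by rewrite -/Fhi -EF -[F]setIT -EG; apply: (bigcup_sup (F, G) qQ).
apply: subset_trans clD_T_B_sub_diag _; apply/bigcupsP => p pP.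
exact: (bigcup_sup p (subsetP PQ p pP)).
Qed.

End Main.

Theorem mainTheorem5 (n r k : nat) (M : matroid n)
  (noloop : forall x, ~ is_loop M x) (nocoloop : forall x, ~ is_coloop M x)
  (hrank : rank M setT = r.+1)
  (B : {set 'I_n.+1}) (hB : nbc_basis M B) (hk : #|IA M B| = k.+1) :
  exists i : nat,
    ([/\ 1 <= i <= k.+1 /\ c M B i \notin cl M (S_B M B) :|: clD M (T_B B),
        (forall j, i < j <= k.+1 -> c M B j \in cl M (S_B M B) :|: clD M (T_B B)),
        cl M (S_B M B :|: cfirst M B i) :|: clD M (T_B B) = setT
      & (forall j, 1 <= j < i -> cl M (S_B M B :|: cfirst M B j) :|: clD M (T_B B) != setT)] /\
      (#|[set FGplus M B r k i j.+1 | j : 'I_n.-1]| = n.-1 /\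
        maximal_biflag M [set FGplus M B r k i j.+1 | j : 'I_n.-1])).
Proof.
have hBasis : is_basis M B by case/andP: hB.
have [y0 y0B] := exists_notin_basis nocoloop hBasis.
have [b0 b0nB b0min] := exists_min_ord (P := [pred y | y \notin B]) y0B.
have b0EA : b0 \notin EA M B by case/andP: hB => _ /eqP ->; rewrite inE.
have [a aD /andP[aB ab]] := fcircuit_lt hBasis b0nB b0EA.
have aIA := IA_of_lt_compl hBasis aB (fun y yB => leq_trans ab (b0min y yB)).
have aP : (a \in IA M B) && (a \in fcircuit M B b0) by rewrite aIA aD.
have [a0 /andP[a0IA a0D] a0min] :=
  exists_min_ord (P := [pred y | (y \in IA M B) && (y \in fcircuit M B b0)]) aP.
have {}a0min y : y \in IA M B -> y \in fcircuit M B b0 -> a0 <= y.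
  by move=> yI yD; apply: a0min; rewrite inE yI yD.
exists (i0 M B a0); split; first split.
- split; first exact (i0_range hk a0IA).
  exact (c_i0_notin hB hk b0nB b0min a0IA a0D).
- exact (c_after_i0 hrank hB hk b0nB b0min a0IA a0D a0min).
- exact (cover_full hrank hB hk b0nB b0min a0IA a0D a0min (leqnn _)).
- exact (cover_before_i0 hB b0nB b0min a0IA a0D).
split; first exact (card_chain hrank hB hk b0nB b0min a0IA a0D).
split; first exact (chain_biflag nocoloop hrank hB hk b0nB b0min a0IA a0D a0min).
exact (chain_max noloop nocoloop hrank hB hk b0nB b0min a0IA a0D a0min).
Qed.
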